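(* Let $G$ be the line graph of some graph, where $G$ has arbitrary infinite order. Then for every assignment of lists of size $2$ to the vertices of $G$, $G$ admits a majority vertex-coloring from these lists.
   Context: Given lists $L(x)$ for the vertices $x$ of $G$, a vertex-coloring from the lists is a map $c$ with $c(x)\in L(x)$ for each vertex $x$. It is a majority vertex-coloring if for every vertex $x$, the cardinality of the set of neighbors of $x$ having color $c(x)$ is at most the cardinality of the set of neighbors of $x$ having a color different from $c(x)$. *)

From Stdlib Require Import List.

Definition simple_graph (V : Type) (adj : V -> V -> Prop) : Prop :=
  (forall x, ~ adj x x) /\ (forall x y, adj x y -> adj y x).

(* (V, adj) is (isomorphic to) the line graph of a simple graph H with
   vertex type W: each vertex x of G is an edge {u x, v x} of H (u x <> v x),
   distinct vertices of G are distinct edges of H, and the edges of H are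
   exactly these; two vertices of G are adjacent iff they are distinct edges
   sharing an endpoint. *)
Definition is_line_graph (V : Type) (adj : V -> V -> Prop) : Prop :=
  exists (W : Type) (u v : V -> W),
    (forall x, u x <> v x) /\
    (forall x y, ((u x = u y /\ v x = v y) \/ (u x = v y /\ v x = u y)) -> x = y) /\
    (forall x y, adj x y <->
       (x <> y /\ (u x = u y \/ u x = v y \/ v x = u y \/ v x = v y))).

Definition infinite_type (V : Type) : Prop :=
  ~ exists l : list V, forall x, In x l.

Definition card_le (A B : Type) : Prop :=
  exists f : A -> B, forall a1 a2, f a1 = f a2 -> a1 = a2.

Definition list_size2 {C : Type} (Lx : C -> Prop) : Prop :=
  exists a b : C, a <> b /\ forall c, Lx c <-> (c = a \/ c = b).

Definition majority_coloring_from {V C : Type} (adj : V -> V -> Prop)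
    (L : V -> C -> Prop) (c : V -> C) : Prop :=
  (forall x, L x (c x)) /\
  (forall x, card_le {y : V | adj x y /\ c y = c x}
                     {y : V | adj x y /\ c y <> c x}).

(* Write each vertex x of G as the edge {u x, v x} of a graph H, and call a vertex w of H
   infinite if infinitely many edges of H meet at w.  By Zorn's lemma take a maximal set M of
   pairs of edges sharing an infinite vertex w (each edge paired at most once at each of its
   ends) such that the pairs form a forest.  Maximality leaves at most two edges unpaired at
   each infinite vertex: pairing any two of them closes a cycle, so all unpaired edges would
   be ends of one path.  By compactness some colouring from the lists gives paired edges
   different colours and satisfies the majority condition at every x with two finite ends:
   finitely many such constraints are met by properly colouring the forest and then flipping
   violating vertices, which lowers the number of monochromatic adjacent pairs.  At an infinite
   end w of any other x, the pairing maps the edges at w coloured like x injectively to edges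
   coloured differently; as these are infinitely many, a Hilbert-hotel shift also absorbs the
   finitely many unpaired edges and the neighbours of x at a finite other end. *)

From Stdlib Require Import List Permutation Bool Arith Lia FinFun.
From Stdlib Require Import Classical ClassicalEpsilon ProofIrrelevance.
From mathcomp Require classical_sets.
Import ListNotations.
Set Bullet Behavior "Strict Subproofs".

Definition decide (P : Prop) : bool := if excluded_middle_informative P then true else false.

Lemma decide_spec (P : Prop) : decide P = true <-> P.
Proof.
  unfold decide; destruct (excluded_middle_informative P); split; auto; discriminate.
Qed.

Lemma decideP (P : Prop) : reflect P (decide P).
Proof. apply iff_reflect. symmetry. apply decide_spec. Qed.

Lemma zorn_chain_union (T : Type) (P : (T -> Prop) -> Prop) :
  (forall F : (T -> Prop) -> Prop, (forall A, F A -> P A) ->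
     (forall A B, F A -> F B -> (forall t, A t -> B t) \/ (forall t, B t -> A t)) ->
     P (fun t => exists2 A, F A & A t)) ->
  exists A, P A /\ forall B, (forall t, A t -> B t) -> P B -> forall t, B t -> A t.
Proof.
  intros H.
  destruct (@classical_sets.Zorn_bigcup T P) as [A [PA Amax]].
  - intros F FP Ftot. apply H; [exact FP|exact Ftot].
  - exists A. split; [exact PA|]. intros B AB PB t Bt.
    apply NNPP; intros nAt. apply (Amax B); [|exact PB].
    split; [exact AB|]. intros BA. apply nAt, BA, Bt.
Qed.

Lemma chain_union_list (T : Type) (F : (T -> Prop) -> Prop) (l : list T) :
  (forall A B, F A -> F B -> (forall t, A t -> B t) \/ (forall t, B t -> A t)) ->
  (forall t, In t l -> exists2 A, F A & A t) ->
  l = [] \/ exists2 A, F A & forall t, In t l -> A t.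
Proof.
  intros tot. induction l as [|t l IH]; intros H; [left; reflexivity|right].
  destruct (H t (or_introl eq_refl)) as [A FA At].
  destruct IH as [->|[B FB HB]]; [intros; apply H; right; assumption| |].
  - exists A; [exact FA|]. intros t' [<-|[]]; exact At.
  - destruct (tot A B FA FB) as [AB|BA].
    + exists B; [exact FB|]. intros t' [<-|Ht]; auto.
    + exists A; [exact FA|]. intros t' [<-|Ht]; auto.
Qed.

Lemma finite_witnesses (A T : Type) (R : A -> T -> Prop) (l : list A) :
  exists ts : list T, (forall t, In t ts -> exists2 p, In p l & R p t) /\
    forall p, In p l -> (exists t, R p t) -> exists2 t, In t ts & R p t.
Proof.
  induction l as [|p l [ts [H1 H2]]].
  - exists []. split; [intros t []|intros p []].
  - destruct (classic (exists t, R p t)) as [[t Ht]|Hn].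
    + exists (t :: ts). split.
      * intros t' [<-|Ht']; [exists p; [left|]; auto|].
        destruct (H1 t' Ht') as [p' ? ?]. exists p'; [right|]; auto.
      * intros p' [<-|Hp'] Hex; [exists t; [left|]; auto|].
        destruct (H2 p' Hp' Hex) as [t' ? ?]. exists t'; [right|]; auto.
    + exists ts. split.
      * intros t' Ht'. destruct (H1 t' Ht') as [p' ? ?]. exists p'; [right|]; auto.
      * intros p' [<-|Hp'] Hex; [contradiction|auto].
Qed.

Section Injections.
Variable V : Type.

Definition injects (A B : V -> Prop) : Prop :=
  exists g : V -> V, (forall y, A y -> B (g y)) /\
    (forall y1 y2, A y1 -> A y2 -> g y1 = g y2 -> y1 = y2).

Lemma injects_card_le (A B : V -> Prop) : injects A B -> card_le {y | A y} {y | B y}.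
Proof.
  intros [g [gAB ginj]].
  exists (fun p => exist _ (g (proj1_sig p)) (gAB _ (proj2_sig p))).
  intros [y1 p1] [y2 p2] E. injection E as E.
  destruct (ginj y1 y2 p1 p2 E). f_equal. apply proof_irrelevance.
Qed.

Lemma injects_mono (A A' B B' : V -> Prop) :
  (forall y, A' y -> A y) -> (forall y, B y -> B' y) -> injects A B -> injects A' B'.
Proof. intros HA HB [g [gAB ginj]]. exists g. split; auto. Qed.

Lemma injects_union (A1 A2 B1 B2 : V -> Prop) :
  injects A1 B1 -> injects A2 B2 -> (forall y, B1 y -> B2 y -> False) ->
  injects (fun y => A1 y \/ A2 y) (fun y => B1 y \/ B2 y).
Proof.
  intros [g1 [g1AB g1inj]] [g2 [g2AB g2inj]] disj.
  exists (fun y => if decide (A1 y) then g1 y else g2 y). split.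
  - intros y Hy. destruct (decideP (A1 y)); [left|right]; auto.
    destruct Hy; [contradiction|auto].
  - intros y1 y2 H1 H2.
    destruct (decideP (A1 y1)) as [a1|a1], (decideP (A1 y2)) as [a2|a2]; intros E.
    + auto.
    + exfalso. destruct H2 as [|H2]; [contradiction|]. apply (disj (g1 y1)); auto.
      rewrite E. auto.
    + exfalso. destruct H1 as [|H1]; [contradiction|]. apply (disj (g1 y2)); auto.
      rewrite <- E. auto.
    + destruct H1 as [|H1], H2 as [|H2]; try contradiction. auto.
Qed.

Lemma list_injects (l1 l2 : list V) :
  NoDup l2 -> length l1 <= length l2 -> injects (fun y => In y l1) (fun y => In y l2).
Proof.
  revert l2. induction l1 as [|x l1 IH]; intros l2 N2 Hlen.
  - exists (fun y => y). split; intros y; contradiction.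
  - destruct l2 as [|z l2]; simpl in Hlen; [lia|].
    inversion N2 as [|? ? Hz N2']; subst.
    destruct (IH l2 N2' ltac:(lia)) as [g [gAB ginj]].
    exists (fun y => if decide (In y l1) then g y else z). split.
    + intros y _. destruct (decideP (In y l1)); simpl; auto.
    + intros y1 y2 H1 H2.
      destruct (decideP (In y1 l1)) as [i1|i1], (decideP (In y2 l1)) as [i2|i2]; intros E.
      * auto.
      * exfalso. apply Hz. rewrite <- E. auto.
      * exfalso. apply Hz. rewrite E. auto.
      * destruct H1 as [<-|]; [|contradiction]. destruct H2 as [<-|]; [reflexivity|contradiction].
Qed.

End Injections.

Section Counting.
Variable V : Type.

Fixpoint sum_in (f : V -> nat) (l : list V) : nat :=
  match l with [] => 0 | y :: l' => f y + sum_in f l' end.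

Definition count_in (P : V -> Prop) (l : list V) : nat :=
  sum_in (fun y => if decide (P y) then 1 else 0) l.

Lemma sum_in_ext (f g : V -> nat) l :
  (forall y, In y l -> f y = g y) -> sum_in f l = sum_in g l.
Proof.
  induction l as [|y l IH]; simpl; intros H; [reflexivity|].
  rewrite H, IH; auto.
Qed.

Lemma sum_in_le (f g : V -> nat) l :
  (forall y, In y l -> f y <= g y) -> sum_in f l <= sum_in g l.
Proof.
  induction l as [|y l IH]; simpl; intros H; [reflexivity|].
  assert (f y <= g y) by (apply H; left; reflexivity).
  assert (sum_in f l <= sum_in g l) by (apply IH; intros z Hz; apply H; right; exact Hz).
  lia.
Qed.

Lemma sum_in_add (f g : V -> nat) l :
  sum_in (fun y => f y + g y) l = sum_in f l + sum_in g l.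
Proof. induction l as [|y l IH]; simpl; lia. Qed.

Lemma sum_in_perm (f : V -> nat) l l' : Permutation l l' -> sum_in f l = sum_in f l'.
Proof. induction 1; simpl; lia. Qed.

Lemma count_in_ext (P Q : V -> Prop) l :
  (forall y, In y l -> P y <-> Q y) -> count_in P l = count_in Q l.
Proof.
  intros H. apply sum_in_ext. intros y Hy.
  destruct (decideP (P y)), (decideP (Q y)); firstorder.
Qed.

Lemma count_in_le (P Q : V -> Prop) l :
  (forall y, In y l -> P y -> Q y) -> count_in P l <= count_in Q l.
Proof.
  intros H. apply sum_in_le. intros y Hy.
  destruct (decideP (P y)), (decideP (Q y)); firstorder.
Qed.

Lemma count_in_perm (P : V -> Prop) l l' : Permutation l l' -> count_in P l = count_in P l'.
Proof. apply sum_in_perm. Qed.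

Lemma count_in_cons_false (P : V -> Prop) x l : ~ P x -> count_in P (x :: l) = count_in P l.
Proof.
  intros Hx. unfold count_in; simpl. destruct (decideP (P x)); [contradiction|reflexivity].
Qed.

Lemma count_in_filter (P : V -> Prop) l :
  count_in P l = length (filter (fun y => decide (P y)) l).
Proof.
  induction l as [|y l IH]; [reflexivity|]. unfold count_in in *; simpl.
  destruct (decide (P y)); simpl; rewrite IH; reflexivity.
Qed.

Lemma count_in_injects (A B : V -> Prop) (l : list V) :
  NoDup l -> (forall y, A y -> In y l) -> (forall y, B y -> In y l) ->
  count_in A l <= count_in B l -> injects V A B.
Proof.
  intros Nl HA HB Hle. rewrite !count_in_filter in Hle.
  apply injects_mono with (A := fun y => In y (filter (fun y => decide (A y)) l))
                          (B := fun y => In y (filter (fun y => decide (B y)) l)).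
  - intros y Hy. apply filter_In. split; [auto|apply decide_spec; exact Hy].
  - intros y Hy. apply filter_In in Hy as [_ Hy]. apply decide_spec, Hy.
  - apply list_injects; [apply NoDup_filter, Nl|exact Hle].
Qed.

Definition sum_deg (R : V -> V -> Prop) (l : list V) : nat :=
  sum_in (fun x => count_in (R x) l) l.

Lemma sum_deg_perm R l l' : Permutation l l' -> sum_deg R l = sum_deg R l'.
Proof.
  intros Hp. unfold sum_deg, count_in.
  rewrite (sum_in_perm _ _ _ Hp). apply sum_in_ext. intros x _. apply sum_in_perm, Hp.
Qed.

Lemma sum_deg_cons (R : V -> V -> Prop) x0 l :
  (forall x y, R x y -> R y x) -> ~ R x0 x0 ->
  sum_deg R (x0 :: l) = 2 * count_in (R x0) l + sum_deg R l.
Proof.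
  intros Rsym Rirr. unfold sum_deg, count_in; simpl.
  destruct (decideP (R x0 x0)) as [|_]; [contradiction|].
  rewrite sum_in_add.
  replace (sum_in (fun x => if decide (R x x0) then 1 else 0) l)
     with (sum_in (fun y => if decide (R x0 y) then 1 else 0) l); [lia|].
  apply sum_in_ext. intros y _. destruct (decideP (R x0 y)), (decideP (R y x0)); firstorder.
Qed.

End Counting.

Arguments count_in {V}. Arguments sum_deg {V}.

Definition col {V C : Type} (a b : V -> C) (s : V -> bool) (x : V) : C :=
  if s x then a x else b x.

Definition same_nbr {V C : Type} (adj : V -> V -> Prop) (c : V -> C) (x y : V) : Prop :=
  adj x y /\ c y = c x.

Definition diff_nbr {V C : Type} (adj : V -> V -> Prop) (c : V -> C) (x y : V) : Prop :=
  adj x y /\ c y <> c x.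

Section ListMajority.
Variables (V C : Type) (a b : V -> C) (adj : V -> V -> Prop).
Hypothesis ab : forall x, a x <> b x.
Hypothesis adj_sym : forall x y, adj x y -> adj y x.
Hypothesis adj_irrefl : forall x, ~ adj x x.

Definition flip (s : V -> bool) (x0 : V) : V -> bool :=
  fun y => if decide (y = x0) then negb (s x0) else s y.

Definition mono_pair (s : V -> bool) (x y : V) : Prop := adj x y /\ col a b s x = col a b s y.

Lemma flip_decreases (X : list V) (s : V -> bool) (x0 : V) :
  NoDup X -> In x0 X -> (forall y, adj x0 y -> In y X) ->
  count_in (diff_nbr adj (col a b s) x0) X < count_in (same_nbr adj (col a b s) x0) X ->
  sum_deg (mono_pair (flip s x0)) X < sum_deg (mono_pair s) X.
Proof.
  intros NX Hx0 Nx0 Hviol.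
  destruct (in_split _ _ Hx0) as [l1 [l2 ->]].
  set (X' := l1 ++ l2). assert (HP : Permutation (l1 ++ x0 :: l2) (x0 :: X')) by
    (symmetry; apply Permutation_middle).
  assert (nX' : ~ In x0 X') by (apply NoDup_remove_2; exact NX).
  rewrite !(count_in_perm _ _ _ _ HP), !count_in_cons_false in Hviol
    by (intros [H _]; exact (adj_irrefl x0 H)).
  set (s' := flip s x0).
  assert (Es' : forall y, y <> x0 -> col a b s' y = col a b s y).
  { intros y Hy. unfold col, s', flip. destruct (decideP (y = x0)); [contradiction|reflexivity]. }
  assert (Ex0 : col a b s' x0 <> col a b s x0).
  { unfold col, s', flip. destruct (decideP (x0 = x0)); [|congruence].
    destruct (s x0); simpl; auto. }
  assert (mono_sym : forall s x y, mono_pair s x y -> mono_pair s y x)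
    by (intros ? ? ? [? ?]; split; auto).
  assert (mono_irr : forall s, ~ mono_pair s x0 x0) by (intros ? [H _]; apply (adj_irrefl x0), H).
  rewrite !(sum_deg_perm _ _ _ _ HP), !sum_deg_cons by auto.
  assert (Erest : sum_deg (mono_pair s') X' = sum_deg (mono_pair s) X').
  { unfold sum_deg. apply sum_in_ext. intros x Hx. apply count_in_ext. intros y Hy.
    unfold mono_pair. rewrite !Es' by (intros ->; contradiction). tauto. }
  assert (Esame : count_in (mono_pair s x0) X' = count_in (same_nbr adj (col a b s) x0) X').
  { apply count_in_ext. intros y _. unfold mono_pair, same_nbr. split; intros [? ?]; auto. }
  assert (Ediff : count_in (mono_pair s' x0) X' <= count_in (diff_nbr adj (col a b s) x0) X').
  { apply count_in_le. intros y Hy [Hadj Hc]. split; [exact Hadj|].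
    rewrite <- Es' by (intros ->; contradiction). congruence. }
  lia.
Qed.

Definition majority_in (Free : V -> Prop) (X : list V) (s : V -> bool) : Prop :=
  forall x, Free x -> In x X -> (forall y, adj x y -> In y X) ->
    count_in (same_nbr adj (col a b s) x) X <= count_in (diff_nbr adj (col a b s) x) X.

Lemma list_majority (Free : V -> Prop) (X : list V) (s0 : V -> bool) : NoDup X ->
  exists s, (forall y, ~ Free y -> s y = s0 y) /\ majority_in Free X s.
Proof.
  intros NX.
  enough (H : forall s, (forall y, ~ Free y -> s y = s0 y) ->
                exists s', (forall y, ~ Free y -> s' y = s0 y) /\ majority_in Free X s')
    by (apply (H s0); reflexivity).
  intros s. induction s as [s IH] using
    (well_founded_induction (Wf_nat.well_founded_ltof _ (fun s => sum_deg (mono_pair s) X))).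
  intros Hs.
  destruct (classic (exists x0, Free x0 /\ In x0 X /\ (forall y, adj x0 y -> In y X) /\
      count_in (diff_nbr adj (col a b s) x0) X < count_in (same_nbr adj (col a b s) x0) X))
    as [[x0 [Fx0 [Hx0 [Nx0 Hv]]]]|Hok].
  - apply (IH (flip s x0)); [apply flip_decreases; assumption|].
    intros y Hy. unfold flip. destruct (decideP (y = x0)) as [->|]; [contradiction|auto].
  - exists s. split; [exact Hs|]. intros x Fx Hx Nx.
    apply Nat.nlt_ge. intros Hv. apply Hok. exists x. auto.
Qed.

End ListMajority.

Section Compactness.
Variables (X J : Type) (sat : J -> (X -> bool) -> Prop) (supp : J -> list X).
Hypothesis sat_local :
  forall j s s', (forall x, In x (supp j) -> s x = s' x) -> sat j s -> sat j s'.
Hypothesis sat_finite : forall K : list J, exists s, forall j, In j K -> sat j s.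

Definition extends (A : X * bool -> Prop) (s : X -> bool) : Prop :=
  forall x b, A (x, b) -> s x = b.

Definition extendable (A : X * bool -> Prop) : Prop :=
  forall K : list J, exists s, extends A s /\ forall j, In j K -> sat j s.

Lemma extendable_functional A x b1 b2 :
  extendable A -> A (x, b1) -> A (x, b2) -> b1 = b2.
Proof.
  intros HA H1 H2. destruct (HA []) as [s [Hs _]].
  rewrite <- (Hs x b1 H1), <- (Hs x b2 H2). reflexivity.
Qed.

Definition override (A : X * bool -> Prop) (s : X -> bool) (x : X) : bool :=
  if decide (A (x, true)) then true else if decide (A (x, false)) then false else s x.

Lemma override_extends A s :
  (forall x b1 b2, A (x, b1) -> A (x, b2) -> b1 = b2) -> extends A (override A s).
Proof.
  intros Afun x b Hb. unfold override.
  destruct (decideP (A (x, true))); [eauto|].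
  destruct (decideP (A (x, false))); [eauto|]. destruct b; contradiction.
Qed.

Lemma override_id A s x : (forall b, A (x, b) -> s x = b) -> override A s x = s x.
Proof.
  intros H. unfold override.
  destruct (decideP (A (x, true))) as [Ht|]; [symmetry; auto|].
  destruct (decideP (A (x, false))) as [Hf|]; [symmetry; auto|reflexivity].
Qed.

Lemma extendable_chain_union (F : (X * bool -> Prop) -> Prop) :
  (forall A, F A -> extendable A) ->
  (forall A B, F A -> F B -> (forall t, A t -> B t) \/ (forall t, B t -> A t)) ->
  extendable (fun t => exists2 A, F A & A t).
Proof.
  intros Fext tot. set (U := fun t => exists2 A, F A & A t).
  assert (Ufun : forall x b1 b2, U (x, b1) -> U (x, b2) -> b1 = b2).
  { intros x b1 b2 [A FA HA] [B FB HB].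
    destruct (tot A B FA FB) as [AB|BA].
    - apply (extendable_functional B x b1 b2); auto.
    - apply (extendable_functional A x b1 b2); auto. }
  intros K. set (Xs := concat (map supp K)).
  assert (HXs : forall j x, In j K -> In x (supp j) -> In x Xs).
  { intros j x Hj Hx. apply in_concat. exists (supp j). split; [apply in_map|]; assumption. }
  set (rel := filter (fun t => decide (U t)) (list_prod Xs [true; false])).
  assert (Hrel : forall x b, In x Xs -> U (x, b) -> In (x, b) rel).
  { intros x b Hx Hu. apply filter_In. split; [apply in_prod; [exact Hx|destruct b; simpl; auto]|].
    apply decide_spec, Hu. }
  assert (Hs : exists s, (forall j, In j K -> sat j s) /\
                         forall x b, In x Xs -> U (x, b) -> s x = b).
  { destruct (chain_union_list _ F rel tot) as [E|[A FA HA]].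
    - intros t Ht. apply filter_In in Ht as [_ Ht]. apply decide_spec, Ht.
    - destruct (sat_finite K) as [s Hs]. exists s. split; [exact Hs|].
      intros x b Hx Hu. specialize (Hrel x b Hx Hu). rewrite E in Hrel. contradiction.
    - destruct (Fext A FA K) as [s [HAs Hs]]. exists s. split; [exact Hs|].
      intros x b Hx Hu. apply HAs, HA, Hrel; assumption. }
  destruct Hs as [s [Hs HsU]].
  exists (override U s). split; [apply override_extends, Ufun|].
  intros j Hj. apply (sat_local j s); [|apply Hs, Hj].
  intros x Hx. symmetry. apply override_id. intros b. apply HsU. eapply HXs; eauto.
Qed.

Lemma maximal_extendable_total A :
  extendable A -> (forall B, (forall t, A t -> B t) -> extendable B -> forall t, B t -> A t) ->
  forall x, exists b, A (x, b).
Proof.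
  intros HA Amax x. apply NNPP. intros Hx.
  assert (Hbad : forall b, exists K, forall s,
            extends A s -> s x = b -> ~ forall j, In j K -> sat j s).
  { intros b. apply NNPP. intros Hk. apply Hx. exists b.
    apply (Amax (fun t => A t \/ t = (x, b))); [intros t Ht; left; exact Ht| |right; reflexivity].
    intros K. apply NNPP. intros HK. apply Hk. exists K. intros s HAs Hsx Hs. apply HK.
    exists s. split; [|exact Hs].
    intros y c [Hyc|E]; [apply HAs, Hyc|injection E as -> ->; exact Hsx]. }
  destruct (Hbad true) as [K1 H1], (Hbad false) as [K2 H2].
  destruct (HA (K1 ++ K2)) as [s [HAs Hs]].
  destruct (s x) eqn:Ex; [apply (H1 s HAs Ex)|apply (H2 s HAs Ex)];
    intros j Hj; apply Hs, in_or_app; auto.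
Qed.

Lemma bool_compactness : exists s, forall j, sat j s.
Proof.
  destruct (zorn_chain_union (X * bool) extendable extendable_chain_union) as [A [HA Amax]].
  pose proof (maximal_extendable_total A HA Amax) as Atot.
  exists (fun x => decide (A (x, true))). intros j.
  destruct (HA [j]) as [s [HAs Hs]].
  apply (sat_local j s); [|apply Hs; left; reflexivity].
  intros x _. destruct (Atot x) as [b Hb]. rewrite (HAs x b Hb).
  destruct (decideP (A (x, true))) as [Ht|Ht].
  - exact (extendable_functional A x b true HA Hb Ht).
  - destruct b; [contradiction|reflexivity].
Qed.

End Compactness.

Definition classic_eq_dec {T : Type} (x y : T) : {x = y} + {x <> y} :=
  excluded_middle_informative (x = y).

Section Forests.
Variables (V : Type) (R : V -> V -> Prop).
Hypothesis R_sym : forall x y, R x y -> R y x.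
Hypothesis R_irrefl : forall x, ~ R x x.

(* Acyclicity, phrased as 1-degeneracy of every finite vertex set. *)
Definition forest : Prop :=
  forall S : list V, S <> [] -> exists x, In x S /\
    forall y1 y2, In y1 S -> In y2 S -> R x y1 -> R x y2 -> y1 = y2.

Lemma not_forest : ~ forest -> exists S, S <> [] /\ forall x, In x S ->
  exists z1 z2, In z1 S /\ In z2 S /\ z1 <> z2 /\ R x z1 /\ R x z2.
Proof.
  intros Hn. apply NNPP. intros HS. apply Hn. intros S HSn. apply NNPP. intros Hx.
  apply HS. exists S. split; [exact HSn|]. intros x Hx'. apply NNPP. intros Hz.
  apply Hx. exists x. split; [exact Hx'|].
  intros y1 y2 Hy1 Hy2 H1 H2. apply NNPP. intros Ne. apply Hz. exists y1, y2. auto.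
Qed.

Lemma forest_list_colorable {C : Type} (a b : V -> C) : (forall x, a x <> b x) -> forest ->
  forall S, exists s, forall y y', In y S -> In y' S -> R y y' -> col a b s y <> col a b s y'.
Proof.
  intros ab HF S. remember (length S) as k. revert S Heqk.
  induction k as [k IH] using lt_wf_ind. intros S Hk.
  destruct S as [|x0 S0]; [exists (fun _ => true); intros y y' []|].
  destruct (HF (x0 :: S0) ltac:(discriminate)) as [x [Hx Hleaf]].
  set (S' := remove classic_eq_dec x (x0 :: S0)).
  destruct (IH (length S') ltac:(subst k S'; apply remove_length_lt, Hx) S' eq_refl) as [s' Hs'].
  set (n := epsilon (inhabits x) (fun n => In n (x0 :: S0) /\ R x n)).
  assert (Hn : forall y, In y (x0 :: S0) -> R x y -> y = n).
  { intros y Hy Hxy. pose proof (epsilon_spec (inhabits x) (fun n => In n (x0 :: S0) /\ R x n)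
      (ex_intro _ y (conj Hy Hxy))) as [Hn Hxn].
    apply Hleaf; assumption. }
  set (s := fun y => if decide (y = x) then decide (a x <> col a b s' n) else s' y).
  assert (Es : forall y, y <> x -> col a b s y = col a b s' y).
  { intros y Hy. unfold col, s. destruct (decideP (y = x)); [contradiction|reflexivity]. }
  assert (Ex : forall y, In y (x0 :: S0) -> R x y -> col a b s x <> col a b s y).
  { intros y Hy Hxy. assert (y <> x) by (intros ->; apply (R_irrefl x), Hxy).
    rewrite (Es y), (Hn y) by assumption. unfold col at 1, s.
    destruct (decideP (x = x)) as [_|]; [|congruence].
    destruct (decideP (a x <> col a b s' n)) as [|Hxn]; [assumption|].
    intros E. apply Hxn. rewrite <- E. apply ab. }
  exists s. intros y y' Hy Hy' Hyy'.
  destruct (classic_eq_dec y x) as [->|Hyx]; [apply Ex; assumption|].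
  destruct (classic_eq_dec y' x) as [->|Hy'x]; [apply not_eq_sym, Ex, R_sym; assumption|].
  rewrite !Es by assumption. apply Hs'; [| |assumption]; apply in_in_remove; assumption.
Qed.

End Forests.

Section MaxDegreeTwo.
Variables (V : Type) (R : V -> V -> Prop).
Hypothesis R_sym : forall x y, R x y -> R y x.
Hypothesis R_irrefl : forall x, ~ R x x.
Hypothesis R_deg2 : forall x y1 y2 y3, R x y1 -> R x y2 -> R x y3 -> y1 = y2 \/ y1 = y3 \/ y2 = y3.

Lemma no_single_leaf (D : list V) (y : V) : In y D ->
  (exists n, In n D /\ R y n) ->
  (forall n1 n2, In n1 D -> In n2 D -> R y n1 -> R y n2 -> n1 = n2) ->
  (forall x, In x D -> x <> y ->
     exists z1 z2, In z1 D /\ In z2 D /\ z1 <> z2 /\ R x z1 /\ R x z2) -> False.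
Proof.
  remember (length D) as k. revert D y Heqk.
  induction k as [k IH] using lt_wf_ind.
  intros D y Hk Hy [n [Hn Hyn]] Hleaf Hdeg.
  assert (ny : n <> y) by (intros ->; apply (R_irrefl y), Hyn).
  destruct (Hdeg n Hn ny) as [z1 [z2 [Hz1 [Hz2 [Hz12 [Hnz1 Hnz2]]]]]].
  assert (exists n2, In n2 D /\ n2 <> y /\ R n n2) as [n2 [Hn2 [Hn2y Hnn2]]].
  { destruct (R_deg2 n y z1 z2 (R_sym y n Hyn) Hnz1 Hnz2) as [<-|[<-|E]];
      [exists z2|exists z1|contradiction]; auto. }
  set (D' := remove classic_eq_dec y D).
  apply (IH (length D') ltac:(subst k D'; apply remove_length_lt, Hy) D' n eq_refl).
  - apply in_in_remove; assumption.
  - exists n2. split; [apply in_in_remove|]; assumption.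
  - intros p1 p2 Hp1 Hp2 H1 H2. apply in_remove in Hp1 as [_ Hp1], Hp2 as [_ Hp2].
    destruct (R_deg2 n y p1 p2 (R_sym y n Hyn) H1 H2) as [E|[E|E]]; [congruence|congruence|exact E].
  - intros x Hx Hxn. apply in_remove in Hx as [Hx Hxy].
    destruct (Hdeg x Hx Hxy) as [p1 [p2 [Hp1 [Hp2 [Hp12 [H1 H2]]]]]].
    assert (Hnot_y : forall p, R x p -> p <> y).
    { intros p Hp ->. apply Hxn, (Hleaf x n); auto. }
    exists p1, p2. repeat split; auto; apply in_in_remove; auto.
Qed.

End MaxDegreeTwo.

Section HilbertHotel.
Variable V : Type.

Fixpoint fresh_prefix (pick : list V -> V) (n : nat) : list V :=
  match n with 0 => [] | S n' => pick (fresh_prefix pick n') :: fresh_prefix pick n' end.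

Lemma fresh_prefix_In pick n m : n < m -> In (pick (fresh_prefix pick n)) (fresh_prefix pick m).
Proof.
  induction m as [|m IH]; intros H; [lia|]. simpl.
  destruct (Nat.eq_dec n m) as [->|ne]; [left; reflexivity|right; apply IH; lia].
Qed.

Lemma injective_seq (D : V -> Prop) : (forall l : list V, exists y, D y /\ ~ In y l) ->
  exists d : nat -> V, (forall n, D (d n)) /\ forall n1 n2, d n1 = d n2 -> n1 = n2.
Proof.
  intros HD. destruct (choice _ HD) as [pick Hpick].
  exists (fun n => pick (fresh_prefix pick n)). split; [intros n; apply Hpick|].
  intros n1 n2 E. destruct (Nat.lt_trichotomy n1 n2) as [Hl|[Hl|Hl]]; [exfalso| |exfalso].
  - apply (proj2 (Hpick (fresh_prefix pick n2))). rewrite <- E. apply fresh_prefix_In, Hl.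
  - exact Hl.
  - apply (proj2 (Hpick (fresh_prefix pick n1))). rewrite E. apply fresh_prefix_In, Hl.
Qed.

Lemma seq_shift (d : nat -> V) (k : nat) : (forall n1 n2, d n1 = d n2 -> n1 = n2) ->
  exists shift : V -> V, (forall t1 t2, shift t1 = shift t2 -> t1 = t2) /\
    (forall t, shift t = t \/ exists n, shift t = d n) /\
    (forall t i, i < k -> shift t <> d i).
Proof.
  intros dinj.
  set (idx := fun t => epsilon (inhabits 0) (fun n => t = d n)).
  assert (Hidx : forall n, d (idx (d n)) = d n).
  { intros n. symmetry.
    exact (epsilon_spec (inhabits 0) (fun i => d n = d i) (ex_intro _ n eq_refl)). }
  exists (fun t => if decide (t = d (idx t)) then d (idx t + k) else t). split; [|split].
  - intros t1 t2.
    destruct (decideP (t1 = d (idx t1))) as [E1|E1], (decideP (t2 = d (idx t2))) as [E2|E2];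
      intros Et.
    + apply dinj in Et. rewrite E1, E2. f_equal. lia.
    + exfalso. apply E2. rewrite <- Et, Hidx. reflexivity.
    + exfalso. apply E1. rewrite Et, Hidx. reflexivity.
    + exact Et.
  - intros t. destruct (decide (t = d (idx t))); [right; eexists|left]; reflexivity.
  - intros t i Hi Ht. destruct (decideP (t = d (idx t))) as [Et|Et].
    + apply dinj in Ht. lia.
    + apply Et. rewrite Ht. symmetry. apply Hidx.
Qed.

Lemma injects_up_to_finite (A D : V -> Prop) (m : V -> V) (E : list V) :
  (forall l : list V, exists y, D y /\ ~ In y l) ->
  (forall y, A y -> ~ In y E -> D (m y)) ->
  (forall y1 y2, A y1 -> A y2 -> ~ In y1 E -> ~ In y2 E -> m y1 = m y2 -> y1 = y2) ->
  injects V A D.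
Proof.
  intros Dinf mD minj.
  destruct (injective_seq D Dinf) as [d [dD dinj]].
  set (room := map d (seq 0 (length E))).
  assert (Hroom : forall t, In t room -> exists i, t = d i /\ i < length E).
  { intros t Ht. apply in_map_iff in Ht as [i [<- Hi]]. apply in_seq in Hi.
    exists i. split; [reflexivity|lia]. }
  destruct (list_injects V E room) as [h [hroom hinj]].
  { apply Injective_map_NoDup; [exact dinj|apply seq_NoDup]. }
  { unfold room. rewrite length_map, length_seq. reflexivity. }
  destruct (seq_shift d (length E) dinj) as [shift [shift_inj [shift_D shift_room]]].
  assert (shift_room' : forall t y, In y E -> shift t <> h y).
  { intros t y Hy E'. destruct (Hroom (h y) (hroom y Hy)) as [i [Ei Hi]].
    apply (shift_room t i Hi). congruence. }
  exists (fun y => if decide (In y E) then h y else shift (m y)). split.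
  - intros y Hy. destruct (decideP (In y E)) as [HE|HE].
    + destruct (Hroom (h y) (hroom y HE)) as [i [-> _]]. apply dD.
    + destruct (shift_D (m y)) as [->|[n ->]]; [apply mD; assumption|apply dD].
  - intros y1 y2 H1 H2.
    destruct (decideP (In y1 E)) as [E1|E1], (decideP (In y2 E)) as [E2|E2]; intros Eg.
    + apply hinj; assumption.
    + exfalso. apply (shift_room' (m y2) y1 E1). symmetry. exact Eg.
    + exfalso. apply (shift_room' (m y1) y2 E2). exact Eg.
    + apply minj; auto.
Qed.

End HilbertHotel.

Section LineGraph.
Variables (V W C : Type) (u v : V -> W) (adj : V -> V -> Prop) (a b : V -> C).
Hypothesis uv_neq : forall x, u x <> v x.
Hypothesis edge_inj :
  forall x y, ((u x = u y /\ v x = v y) \/ (u x = v y /\ v x = u y)) -> x = y.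
Hypothesis adj_iff :
  forall x y, adj x y <-> (x <> y /\ (u x = u y \/ u x = v y \/ v x = u y \/ v x = v y)).
Hypothesis ab : forall x, a x <> b x.

Definition incident (x : V) (w : W) : Prop := u x = w \/ v x = w.

Definition finite_at (w : W) : Prop := exists l : list V, forall x, incident x w -> In x l.

Definition finite_ends (x : V) : Prop := finite_at (u x) /\ finite_at (v x).

Lemma adj_sym x y : adj x y -> adj y x.
Proof. rewrite !adj_iff. intros [H1 H2]. split; [congruence|intuition congruence]. Qed.

Lemma adj_irrefl x : ~ adj x x.
Proof. rewrite adj_iff. tauto. Qed.

Lemma adj_ends x w z y : (u x = w /\ v x = z \/ u x = z /\ v x = w) ->
  (adj x y <-> x <> y /\ (incident y w \/ incident y z)).
Proof.
  intros E. rewrite adj_iff. unfold incident.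
  destruct E as [[<- <-]|[<- <-]]; split; intros [H1 H2]; split; auto; intuition congruence.
Qed.

Lemma incident_both t x w z :
  incident t w -> incident t z -> incident x w -> incident x z -> w <> z -> t = x.
Proof.
  unfold incident. intros H1 H2 H3 H4 wz. apply edge_inj.
  pose proof (uv_neq t); pose proof (uv_neq x).
  destruct H1, H2, H3, H4;
    first [left; split; congruence | right; split; congruence | exfalso; congruence].
Qed.

Definition matched (M : W * V * V -> Prop) (x y : V) : Prop := exists w, M (w, x, y).

Record good (M : W * V * V -> Prop) : Prop := {
  good_pair : forall w y y', M (w, y, y') ->
    ~ finite_at w /\ incident y w /\ incident y' w /\ y <> y' /\ M (w, y', y);
  good_fun : forall w y y1 y2, M (w, y, y1) -> M (w, y, y2) -> y1 = y2;
  good_forest : forest V (matched M) }.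

Definition unmatched (M : W * V * V -> Prop) (w : W) (y : V) : Prop :=
  incident y w /\ forall y', ~ M (w, y, y').

Section Good.
Variable M : W * V * V -> Prop.
Hypothesis HM : good M.

Lemma matched_sym x y : matched M x y -> matched M y x.
Proof. intros [w H]. exists w. apply (good_pair M HM) in H. tauto. Qed.

Lemma matched_irrefl x : ~ matched M x x.
Proof. intros [w H]. apply (good_pair M HM) in H. tauto. Qed.

Lemma matched_at_end x y : matched M x y -> exists w, M (w, x, y) /\ (w = u x \/ w = v x).
Proof.
  intros [w H]. exists w. split; [exact H|].
  destruct (good_pair M HM _ _ _ H) as [_ [[E|E] _]]; auto.
Qed.

Lemma matched_deg2 x y1 y2 y3 :
  matched M x y1 -> matched M x y2 -> matched M x y3 -> y1 = y2 \/ y1 = y3 \/ y2 = y3.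
Proof.
  intros H1 H2 H3.
  destruct (matched_at_end _ _ H1) as [w1 [M1 E1]], (matched_at_end _ _ H2) as [w2 [M2 E2]],
    (matched_at_end _ _ H3) as [w3 [M3 E3]].
  pose proof (good_fun M HM) as F.
  destruct E1 as [->| ->], E2 as [->| ->], E3 as [->| ->]; eauto.
Qed.

Lemma unmatched_leaf w y z1 z2 : unmatched M w y -> matched M y z1 -> matched M y z2 -> z1 = z2.
Proof.
  intros [Hy Hn] H1 H2.
  destruct (matched_at_end _ _ H1) as [w1 [M1 E1]], (matched_at_end _ _ H2) as [w2 [M2 E2]].
  assert (w1 <> w) by (intros ->; eapply Hn; eauto).
  assert (w2 <> w) by (intros ->; eapply Hn; eauto).
  assert (w1 = w2) by (destruct Hy as [<-| <-], E1, E2; congruence).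
  subst w2. eapply (good_fun M HM); eauto.
Qed.

End Good.

Lemma good_chain_union (F : (W * V * V -> Prop) -> Prop) : (forall A, F A -> good A) ->
  (forall A B, F A -> F B -> (forall t, A t -> B t) \/ (forall t, B t -> A t)) ->
  good (fun t => exists2 A, F A & A t).
Proof.
  intros Fgood tot. set (U := fun t => exists2 A, F A & A t). split.
  - intros w y y' [A FA HA]. destruct (good_pair A (Fgood A FA) _ _ _ HA) as [? [? [? [? ?]]]].
    repeat split; auto. exists A; assumption.
  - intros w y y1 y2 [A FA HA] [B FB HB].
    destruct (tot A B FA FB) as [AB|BA];
      [apply (good_fun B (Fgood B FB) w y)|apply (good_fun A (Fgood A FA) w y)]; auto.
  - intros S HS.
    destruct (finite_witnesses (V * V) (W * V * V)
      (fun p t => U t /\ snd (fst t) = fst p /\ snd t = snd p) (list_prod S S)) as [ts [Hts Hwit]].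
    assert (Hwit' : forall x y, In x S -> In y S -> matched U x y ->
                    exists2 t, In t ts & t = (fst (fst t), x, y)).
    { intros x y Hx Hy [w Hw].
      destruct (Hwit (x, y)) as [[[w' x'] y'] Ht [_ [Ex Ey]]];
        [apply in_prod; assumption|exists (w, x, y); auto|].
      simpl in Ex, Ey. subst. exists (w', x, y); auto. }
    destruct (chain_union_list _ F ts tot) as [E|[A FA HA]].
    + intros t Ht. destruct (Hts t Ht) as [p _ [Ut _]]. exact Ut.
    + destruct S as [|x S0]; [congruence|]. exists x. split; [left; reflexivity|].
      intros y1 y2 Hy1 _ H1 _. exfalso.
      destruct (Hwit' x y1 (or_introl eq_refl) Hy1 H1) as [t Ht _]. rewrite E in Ht. exact Ht.
    + destruct (good_forest A (Fgood A FA) S HS) as [x [Hx Hleaf]].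
      exists x. split; [exact Hx|]. intros y1 y2 Hy1 Hy2 H1 H2.
      destruct (Hwit' x y1 Hx Hy1 H1) as [t1 Ht1 E1], (Hwit' x y2 Hx Hy2 H2) as [t2 Ht2 E2].
      apply Hleaf; auto; [exists (fst (fst t1))|exists (fst (fst t2))];
        [rewrite <- E1|rewrite <- E2]; apply HA; assumption.
Qed.

Definition maximal_good (M : W * V * V -> Prop) : Prop :=
  good M /\ forall B, (forall t, M t -> B t) -> good B -> forall t, B t -> M t.

Lemma exists_maximal_good : exists M, maximal_good M.
Proof.
  destruct (zorn_chain_union (W * V * V) good good_chain_union) as [M [HM Mmax]].
  exists M. split; assumption.
Qed.

Section Maximal.
Variable M : W * V * V -> Prop.
Hypothesis HMmax : maximal_good M.
Let HM : good M := proj1 HMmax.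

Definition add_pair (w : W) (p q : V) (t : W * V * V) : Prop :=
  M t \/ t = (w, p, q) \/ t = (w, q, p).

Lemma matched_add_pair w p q x z : matched (add_pair w p q) x z ->
  matched M x z \/ (x = p /\ z = q) \/ (x = q /\ z = p).
Proof.
  intros [w' [H|[H|H]]]; [left; exists w'; exact H|right; left|right; right];
    injection H as -> -> ->; auto.
Qed.

Lemma add_pair_not_forest w p q : ~ finite_at w -> unmatched M w p -> unmatched M w q -> p <> q ->
  ~ forest V (matched (add_pair w p q)).
Proof.
  intros Hw [Hp Up] [Hq Uq] pq HF. apply (Up q).
  apply (proj2 HMmax (add_pair w p q)); [intros t Ht; left; exact Ht| |right; left; reflexivity].
  split; [| |exact HF].
  - intros w' y y' [H|[H|H]].
    + destruct (good_pair M HM _ _ _ H) as [? [? [? [? ?]]]]. repeat split; auto. left; assumption.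
    + injection H as -> -> ->. repeat split; auto. right; right; reflexivity.
    + injection H as -> -> ->. repeat split; auto. right; left; reflexivity.
  - intros w' y y1 y2 [H1|[H1|H1]] [H2|[H2|H2]];
      try (injection H1 as -> -> ->); try (injection H2 as ? ? ->);
      subst; try reflexivity; try congruence;
      first [exact (good_fun M HM _ _ _ _ H1 H2)
            |exfalso; eapply Up; eassumption | exfalso; eapply Uq; eassumption].
Qed.

Lemma unmatched_pair_cycle w p q : ~ finite_at w -> unmatched M w p -> unmatched M w q -> p <> q ->
  exists S, In p S /\ (exists n, In n S /\ matched M p n) /\
    forall y, In y S -> y <> p -> y <> q ->
      exists z1 z2, In z1 S /\ In z2 S /\ z1 <> z2 /\ matched M y z1 /\ matched M y z2.
Proof.
  intros Hw Up Uq pq.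
  destruct (not_forest _ _ (add_pair_not_forest w p q Hw Up Uq pq)) as [S [HSn HS]].
  assert (pS : In p S).
  { apply NNPP. intros np. destruct (good_forest M HM S HSn) as [x0 [Hx0 Hleaf]].
    destruct (HS x0 Hx0) as [z1 [z2 [Hz1 [Hz2 [Hz [H1 H2]]]]]].
    apply Hz, Hleaf; auto;
      [destruct (matched_add_pair _ _ _ _ _ H1) as [H|[[-> ->]|[-> ->]]]
      |destruct (matched_add_pair _ _ _ _ _ H2) as [H|[[-> ->]|[-> ->]]]];
      auto; contradiction. }
  exists S. split; [exact pS|]. split.
  - destruct (HS p pS) as [z1 [z2 [Hz1 [Hz2 [Hz [H1 H2]]]]]].
    destruct (matched_add_pair _ _ _ _ _ H1) as [H|[[_ E1]|[E1 _]]]; [exists z1; auto| |congruence].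
    destruct (matched_add_pair _ _ _ _ _ H2) as [H|[[_ E2]|[E2 _]]]; [exists z2; auto| |congruence].
    congruence.
  - intros y Hy yp yq. destruct (HS y Hy) as [z1 [z2 [Hz1 [Hz2 [Hz [H1 H2]]]]]].
    exists z1, z2. repeat split; auto.
    + destruct (matched_add_pair _ _ _ _ _ H1) as [H|[[E _]|[E _]]]; [exact H|congruence..].
    + destruct (matched_add_pair _ _ _ _ _ H2) as [H|[[E _]|[E _]]]; [exact H|congruence..].
Qed.

Lemma no_three_unmatched w y1 y2 y3 : ~ finite_at w ->
  unmatched M w y1 -> unmatched M w y2 -> unmatched M w y3 ->
  y1 <> y2 -> y1 <> y3 -> y2 <> y3 -> False.
Proof.
  intros Hw U1 U2 U3 d12 d13 d23.
  destruct (unmatched_pair_cycle w y1 y2 Hw U1 U2 d12) as [S12 [p12 [[n [Hn Hyn]] H12]]].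
  destruct (unmatched_pair_cycle w y1 y3 Hw U1 U3 d13) as [S13 [p13 [[n' [Hn' Hyn']] H13]]].
  assert (n2 : ~ In y2 S13).
  { intros H. destruct (H13 y2 H (not_eq_sym d12) d23) as [z1 [z2 [_ [_ [Hz [A1 A2]]]]]].
    apply Hz. apply (unmatched_leaf M HM w y2); assumption. }
  assert (n3 : ~ In y3 S12).
  { intros H.
    destruct (H12 y3 H (not_eq_sym d13) (not_eq_sym d23)) as [z1 [z2 [_ [_ [Hz [A1 A2]]]]]].
    apply Hz. apply (unmatched_leaf M HM w y3); assumption. }
  assert (nn : n = n') by (apply (unmatched_leaf M HM w y1); assumption). subst n'.
  set (D := filter (fun x => decide (In x S13)) S12).
  assert (HD : forall x, In x D <-> In x S12 /\ In x S13).
  { intros x. unfold D. rewrite filter_In, decide_spec. reflexivity. }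
  apply (no_single_leaf V (matched M) (matched_sym M HM) (matched_irrefl M HM)
           (matched_deg2 M HM) D y1).
  - apply HD. split; assumption.
  - exists n. split; [apply HD; split|]; assumption.
  - intros m1 m2 _ _ A1 A2. apply (unmatched_leaf M HM w y1); assumption.
  - intros x Hx xy1. apply HD in Hx as [Hx12 Hx13].
    assert (xy2 : x <> y2) by (intros ->; contradiction).
    assert (xy3 : x <> y3) by (intros ->; contradiction).
    destruct (H12 x Hx12 xy1 xy2) as [z1 [z2 [Hz1 [Hz2 [Hz [A1 A2]]]]]].
    destruct (H13 x Hx13 xy1 xy3) as [z3 [z4 [Hz3 [Hz4 [Hz' [A3 A4]]]]]].
    exists z1, z2. repeat split; auto; apply HD; split; auto.
    + destruct (matched_deg2 M HM _ _ _ _ A1 A3 A4) as [->|[->|E]]; [assumption..|contradiction].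
    + destruct (matched_deg2 M HM _ _ _ _ A2 A3 A4) as [->|[->|E]]; [assumption..|contradiction].
Qed.

Lemma unmatched_finite w : ~ finite_at w -> exists U, forall y, unmatched M w y -> In y U.
Proof.
  intros Hw.
  destruct (classic (exists y1, unmatched M w y1)) as [[y1 U1]|N1].
  2:{ exists []. intros y Hy. apply N1. exists y. exact Hy. }
  destruct (classic (exists y2, unmatched M w y2 /\ y2 <> y1)) as [[y2 [U2 d]]|N2].
  2:{ exists [y1]. intros y Hy. destruct (classic_eq_dec y y1) as [->|ne]; [left; reflexivity|].
      exfalso. apply N2. exists y. split; assumption. }
  exists [y1; y2]. intros y Hy.
  destruct (classic_eq_dec y y1) as [->|ne1]; [left; reflexivity|].
  destruct (classic_eq_dec y y2) as [->|ne2]; [right; left; reflexivity|].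
  exfalso. apply (no_three_unmatched w y1 y2 y); auto.
Qed.

Definition partner (w : W) (y : V) : V := epsilon (inhabits y) (fun y' => M (w, y, y')).

Lemma partner_eq w y y' : M (w, y, y') -> partner w y = y'.
Proof.
  intros H. apply (good_fun M HM w y); [|exact H].
  exact (epsilon_spec (inhabits y) (fun y' => M (w, y, y')) (ex_intro _ y' H)).
Qed.

Section SameSide.
Variable s : V -> bool.
Hypothesis s_proper : forall w y y', M (w, y, y') -> col a b s y <> col a b s y'.

Definition same_at (w : W) (x y : V) : Prop :=
  incident y w /\ y <> x /\ col a b s y = col a b s x.

Definition diff_at (w : W) (x y : V) : Prop :=
  incident y w /\ y <> x /\ col a b s y <> col a b s x.

Lemma partner_diff_at w x y : same_at w x y -> ~ unmatched M w y ->
  diff_at w x (partner w y) /\ partner w (partner w y) = y.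
Proof.
  intros [Hy [_ Hc]] Hm.
  assert (Hyp : M (w, y, partner w y)).
  { apply NNPP. intros Hn. apply Hm. split; [exact Hy|].
    intros y' H'. apply Hn. rewrite (partner_eq w y y' H'). exact H'. }
  destruct (good_pair M HM _ _ _ Hyp) as [_ [_ [Hp [_ Hpy]]]].
  pose proof (s_proper _ _ _ Hyp) as Hcp.
  split; [split; [exact Hp|split]; [intros E; rewrite E in Hcp|]; congruence|].
  apply partner_eq, Hpy.
Qed.

Lemma diff_at_infinite w x : ~ finite_at w -> incident x w ->
  forall l : list V, exists y, diff_at w x y /\ ~ In y l.
Proof.
  intros Hw Hx l. destruct (unmatched_finite w Hw) as [U HU].
  apply NNPP. intros Hl. apply Hw.
  exists (l ++ map (partner w) l ++ U ++ [x]). intros y Hy. rewrite !in_app_iff.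
  destruct (classic_eq_dec y x) as [->|yx]; [right; right; right; left; reflexivity|].
  destruct (classic (col a b s y = col a b s x)) as [Hc|Hc].
  - destruct (classic (unmatched M w y)) as [Hu|Hu]; [right; right; left; apply HU, Hu|].
    destruct (partner_diff_at w x y (conj Hy (conj yx Hc)) Hu) as [Hd Hpp].
    right; left. apply in_map_iff. exists (partner w y). split; [exact Hpp|].
    apply NNPP. intros ni. apply Hl. eauto.
  - left. apply NNPP. intros ni. apply Hl. exists y. repeat split; assumption.
Qed.

Lemma same_at_injects w x (B : list V) : ~ finite_at w -> incident x w ->
  injects V (fun y => same_at w x y \/ In y B) (diff_at w x).
Proof.
  intros Hw Hx. destruct (unmatched_finite w Hw) as [U HU].
  assert (Hmatched : forall y, same_at w x y \/ In y B -> ~ In y (U ++ B) ->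
                     same_at w x y /\ ~ unmatched M w y).
  { intros y Hy HE. rewrite in_app_iff in HE.
    destruct Hy as [Hy|Hy]; [|exfalso; auto].
    split; [exact Hy|]. intros Hu. apply HE. left. apply HU, Hu. }
  apply (injects_up_to_finite V _ _ (partner w) (U ++ B)).
  - apply diff_at_infinite; assumption.
  - intros y Hy HE. destruct (Hmatched y Hy HE) as [Hs Hu]. apply (partner_diff_at w x y Hs Hu).
  - intros y1 y2 H1 H2 HE1 HE2 Ep.
    destruct (Hmatched y1 H1 HE1) as [Hs1 Hu1], (Hmatched y2 H2 HE2) as [Hs2 Hu2].
    rewrite <- (proj2 (partner_diff_at w x y1 Hs1 Hu1)),
            <- (proj2 (partner_diff_at w x y2 Hs2 Hu2)), Ep.
    reflexivity.
Qed.

Lemma majority_at_infinite_end x w z : ~ finite_at w ->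
  (u x = w /\ v x = z \/ u x = z /\ v x = w) ->
  injects V (same_nbr adj (col a b s) x) (diff_nbr adj (col a b s) x).
Proof.
  intros Hw Exz.
  assert (wz : w <> z) by (destruct Exz as [[<- <-]|[<- <-]]; auto).
  assert (xw : incident x w) by (unfold incident; tauto).
  assert (xz : incident x z) by (unfold incident; tauto).
  assert (Hsame : forall y, same_nbr adj (col a b s) x y ->
                  y <> x /\ (incident y w \/ incident y z) /\
                              col a b s y = col a b s x).
  { intros y [Hy Hc]. apply (adj_ends x w z y Exz) in Hy as [yx Hy]. auto. }
  assert (Hdiff : forall y, y <> x -> incident y w \/ incident y z -> col a b s y <> col a b s x ->
                            diff_nbr adj (col a b s) x y).
  { intros y yx Hy Hc. split; [apply (adj_ends x w z y Exz); auto|exact Hc]. }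
  destruct (classic (finite_at z)) as [[Bz HBz]|Hz].
  - eapply injects_mono; [| |exact (same_at_injects w x Bz Hw xw)].
    + intros y Hy. destruct (Hsame y Hy) as [yx [[Hyw|Hyz] Hc]];
        [left; repeat split|right; apply HBz]; assumption.
    + intros y [Hy [yx Hc]]. auto.
  - eapply injects_mono; [| |apply (injects_union V _ _ _ _ (same_at_injects w x [] Hw xw)
                                                        (same_at_injects z x [] Hz xz))].
    + intros y Hy. destruct (Hsame y Hy) as [yx [[Hyw|Hyz] Hc]]; [left|right]; left;
        repeat split; assumption.
    + intros y [[Hy [yx Hc]]|[Hy [yx Hc]]]; auto.
    + intros y [Hyw [yx _]] [Hyz _]. apply yx, (incident_both y x w z); assumption.
Qed.

End SameSide.

End Maximal.

Lemma not_finite_ends y w : incident y w -> ~ finite_at w -> ~ finite_ends y.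
Proof. intros [<-| <-] Hw [Hu Hv]; contradiction. Qed.

Definition nbrs (x : V) : list V := epsilon (inhabits []) (fun l => forall y, adj x y -> In y l).

Lemma nbrs_spec x : finite_ends x -> forall y, adj x y -> In y (nbrs x).
Proof.
  intros [[lu Hu] [lv Hv]].
  apply (epsilon_spec (inhabits []) (fun l => forall y, adj x y -> In y l)).
  exists (lu ++ lv). intros y Hy. apply in_app_iff.
  rewrite (adj_ends x (u x) (v x) y (or_introl (conj eq_refl eq_refl))) in Hy.
  destruct Hy as [_ [Hy|Hy]]; unfold incident in Hy; [left; apply Hu|right; apply Hv];
    unfold incident; intuition congruence.
Qed.

Definition constraint : Type := ((W * V * V) + V)%type.

Definition holds (M : W * V * V -> Prop) (j : constraint) (s : V -> bool) : Prop :=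
  match j with
  | inl (w, y, y') => M (w, y, y') -> col a b s y <> col a b s y'
  | inr x => finite_ends x -> injects V (same_nbr adj (col a b s) x) (diff_nbr adj (col a b s) x)
  end.

Definition scope (j : constraint) : list V :=
  match j with inl (_, y, y') => [y; y'] | inr x => x :: nbrs x end.

Lemma holds_local M j s s' :
  (forall x, In x (scope j) -> s x = s' x) -> holds M j s -> holds M j s'.
Proof.
  assert (Ecol : forall (s s' : V -> bool) y, s y = s' y -> col a b s y = col a b s' y)
    by (intros ? ? ? E; unfold col; rewrite E; reflexivity).
  destruct j as [[[w y] y']|x]; simpl; intros E H.
  - intros Ht. rewrite <- !(Ecol s s'); auto.
  - intros Fx.
    assert (Ex : col a b s x = col a b s' x) by (apply Ecol, E; left; reflexivity).
    assert (Ey : forall y, adj x y -> col a b s y = col a b s' y)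
      by (intros y Hy; apply Ecol, E; right; apply nbrs_spec; assumption).
    apply injects_mono with (A := same_nbr adj (col a b s) x)
                            (B := diff_nbr adj (col a b s) x); [| |exact (H Fx)];
      intros y [Hxy Hc]; split; try exact Hxy; [rewrite Ex, Ey|rewrite <- Ex, <- Ey]; assumption.
Qed.

Lemma holds_finite M : good M -> forall K : list constraint,
  exists s, forall j, In j K -> holds M j s.
Proof.
  intros HM K. set (Xs := nodup classic_eq_dec (concat (map scope K))).
  assert (NXs : NoDup Xs) by apply NoDup_nodup.
  assert (HXs : forall j y, In j K -> In y (scope j) -> In y Xs).
  { intros j y Hj Hy. apply nodup_In, in_concat.
    exists (scope j). split; [apply in_map|]; assumption. }
  destruct (forest_list_colorable V (matched M) (matched_sym M HM) (matched_irrefl M HM) a b ab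
              (good_forest M HM) Xs) as [s0 Hs0].
  destruct (list_majority V C a b adj ab adj_sym adj_irrefl finite_ends Xs s0 NXs) as [s [Hss0 Hs]].
  exists s. intros [[[w y] y']|x] Hj; simpl.
  - intros Ht. destruct (good_pair M HM _ _ _ Ht) as [Hw [Hy [Hy' _]]].
    unfold col. rewrite !Hss0 by (eapply not_finite_ends; eassumption).
    fold (col a b s0 y) (col a b s0 y').
    apply Hs0; [apply (HXs _ y Hj)|apply (HXs _ y' Hj)|exists w; exact Ht]; simpl; auto.
  - intros Fx. assert (Nx : forall y, adj x y -> In y Xs).
    { intros y Hy. apply (HXs (inr x) y Hj). right. apply nbrs_spec; assumption. }
    apply (count_in_injects V _ _ Xs NXs); [intros y [Hy _]; auto|intros y [Hy _]; auto|].
    apply Hs; [exact Fx|apply (HXs (inr x) x Hj); left; reflexivity|exact Nx].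
Qed.

Lemma line_graph_majority (L : V -> C -> Prop) :
  (forall x c, L x c <-> c = a x \/ c = b x) -> exists c, majority_coloring_from adj L c.
Proof.
  intros HL. destruct exists_maximal_good as [M HMmax].
  destruct (bool_compactness V constraint (holds M) scope (holds_local M)
              (holds_finite M (proj1 HMmax))) as [s Hs].
  exists (col a b s). split.
  - intros x. apply HL. unfold col. destruct (s x); auto.
  - intros x. apply injects_card_le.
    destruct (classic (finite_ends x)) as [Fx|nF]; [exact (Hs (inr x) Fx)|].
    assert (s_proper : forall w y y', M (w, y, y') -> col a b s y <> col a b s y')
      by (intros w y y'; exact (Hs (inl (w, y, y')))).
    destruct (classic (finite_at (u x))) as [Fu|Fu].
    + apply (majority_at_infinite_end M HMmax s s_proper x (v x) (u x)); [|right; auto].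
      intros Fv. apply nF. split; assumption.
    + apply (majority_at_infinite_end M HMmax s s_proper x (u x) (v x)); [exact Fu|left; auto].
Qed.

End LineGraph.

Theorem mainTheorem4 (V : Type) (adj : V -> V -> Prop) :
  simple_graph V adj -> is_line_graph V adj -> infinite_type V ->
  forall (C : Type) (L : V -> C -> Prop),
    (forall x, list_size2 (L x)) ->
    exists c : V -> C, majority_coloring_from adj L c.
Proof.
  intros _ [W [u [v [uv_neq [edge_inj adj_iff]]]]] _ C L HL.
  destruct (choice (fun x (ab : C * C) =>
      fst ab <> snd ab /\ forall c, L x c <-> c = fst ab \/ c = snd ab)) as [ab Hab].
  { intros x. destruct (HL x) as [a [b H]]. exists (a, b). exact H. }
  apply (line_graph_majority V W C u v adj (fun x => fst (ab x)) (fun x => snd (ab x))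
           uv_neq edge_inj adj_iff (fun x => proj1 (Hab x))).
  intros x. apply (proj2 (Hab x)).
Qed.
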